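(* For $t\in\mathbb R$ let $a_n=a_n(t)>0$ ($n\ge1$, $a_0=0$) be the recurrence coefficients in $a_{n+1}p_{n+1}(x)=xp_n(x)-a_np_{n-1}(x)$ of the orthonormal polynomials for the weight $\exp(-x^4/4-tx^2)$ on $\mathbb R$. Then for all $n\ge1$: $$a_n^2\big(a_{n-1}^2+a_n^2+a_{n+1}^2\big)+2ta_n^2=n,$$ $$4a_n^3\ddot a_n=(3a_n^4+2ta_n^2-n)(a_n^4+2ta_n^2+n),$$ and $u_n=a_n^2$ satisfies the Painlevé IV equation $$\ddot u=\frac{\dot u^2}{2u}+\frac{3u^3}{2}+4tu^2+2(t^2-\alpha)u+\frac{\beta}{u}\quad\text{with }\alpha=-\frac n2,\ \beta=-\frac{n^2}{2}.$$
   Context: Dots denote $d/dt$. *)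

From Stdlib Require Import Reals.
From Coquelicot Require Import Coquelicot.
Open Scope R_scope.

Definition quartic_weight (t x : R) : R := exp (- x ^ 4 / 4 - t * x ^ 2).

Definition is_poly_deg_pos_lead (n : nat) (f : R -> R) : Prop :=
  exists c : nat -> R, 0 < c n /\ forall x, f x = sum_f_R0 (fun k => c k * x ^ k) n.

Definition orthonormal_system (w : R -> R) (p : nat -> R -> R) : Prop :=
  (forall n, is_poly_deg_pos_lead n (p n)) /\
  (forall m n, is_RInt_gen (fun x => p m x * p n x * w x)
                  (Rbar_locally m_infty) (Rbar_locally p_infty)
                  (if Nat.eqb m n then 1 else 0)).

(* a : nat -> R are the recurrence coefficients of p:
   a_0 = 0, a_n > 0 for n >= 1 and a_{n+1} p_{n+1}(x) = x p_n(x) - a_n p_{n-1}(x)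
   (for n = 0 the last term vanishes since a_0 = 0). *)
Definition recurrence_coeffs (p : nat -> R -> R) (a : nat -> R) : Prop :=
  a 0%nat = 0 /\ (forall n, (1 <= n)%nat -> 0 < a n) /\
  (forall n x, a (S n) * p (S n) x = x * p n x - a n * p (n - 1)%nat x).

(* Write u_n = a_n^2.  The Freud equation comes from integrating the derivative of p_n p_(n-1) w
   over the line: the boundary term vanishes, p_n' contributes its p_(n-1)-coefficient n / a_n
   (read off from the differentiated three-term recurrence), and w' = -(x^3 + 2 t x) w contributes
   the Jacobi-matrix elements <x^3 p_n, p_(n-1)> + 2 t <x p_n, p_(n-1)>.
   Differentiating in t gives the Toda equation u_n' = u_n (u_(n-1) - u_(n+1)): for n = 1 because
   u_1 = m_2 / m_0 for the even moments, which satisfy m_2k' = - m_(2k+2), and for larger n by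
   induction, since the Freud equation expresses u_(n+1) through u_n, u_(n-1) and t.
   Differentiating the Toda equation once more and eliminating u_(n-2), ..., u_(n+2) with the Freud
   equations at n-1, n, n+1 yields Painleve IV for u_n; the equation for a_n = sqrt u_n then follows
   from 4 a^3 a'' = 2 u u'' - u'^2. *)

From Stdlib Require Import Reals Lra Lia FunctionalExtensionality.
From Coquelicot Require Import Coquelicot.
Open Scope R_scope.

Notation minf := (Rbar_locally m_infty).
Notation pinf := (Rbar_locally p_infty).

Lemma is_RInt_gen_ext_pointwise (f g : R -> R) l :
  (forall x, f x = g x) -> is_RInt_gen f minf pinf l -> is_RInt_gen g minf pinf l.
Proof.
  intros Hfg Hf. apply is_RInt_gen_ext with f; [| exact Hf].
  apply filter_forall. intros; apply Hfg.
Qed.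

Lemma is_RInt_gen_lincomb (f g : R -> R) lf lg c d :
  is_RInt_gen f minf pinf lf -> is_RInt_gen g minf pinf lg ->
  is_RInt_gen (fun x => c * f x + d * g x) minf pinf (c * lf + d * lg).
Proof.
  intros Hf Hg.
  exact (is_RInt_gen_plus _ _ _ _ (is_RInt_gen_scal _ c _ Hf) (is_RInt_gen_scal _ d _ Hg)).
Qed.

Lemma is_RInt_gen_le (f g : R -> R) lf lg :
  (forall x, f x <= g x) ->
  is_RInt_gen f minf pinf lf -> is_RInt_gen g minf pinf lg -> lf <= lg.
Proof.
  intros Hfg Hf Hg.
  assert (Hd := is_RInt_gen_lincomb _ _ _ _ (-1) 1 Hf Hg).
  assert (Hnorm : norm (-1 * lf + 1 * lg) <= -1 * lf + 1 * lg).
  { refine (RInt_gen_norm _ _ _ _ _ _ Hd Hd).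
    - apply Filter_prod with (fun x => x < 0) (fun y => 0 < y);
        [exists 0; auto | exists 0; auto | intros x y Hx Hy; simpl; lra].
    - apply filter_forall. intros ab x _. specialize (Hfg x).
      unfold norm; simpl; unfold abs; simpl. rewrite Rabs_right; lra. }
  pose proof (norm_ge_0 (-1 * lf + 1 * lg)). lra.
Qed.

Lemma is_RInt_gen_RInt_close (f : R -> R) l :
  is_RInt_gen f minf pinf l -> (forall a b, ex_RInt f a b) ->
  forall eps, 0 < eps -> exists A B, forall a b, a < A -> B < b -> Rabs (RInt f a b - l) < eps.
Proof.
  intros Hf Hex eps Heps.
  destruct (Hf _ (locally_ball l (mkposreal eps Heps))) as [P Q [A HA] [B HB] HPQ].
  exists A, B. intros a b Ha Hb.
  destruct (HPQ a b (HA a Ha) (HB b Hb)) as [y [Hy Hball]].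
  simpl in Hy. rewrite (is_RInt_unique _ _ _ _ Hy). exact Hball.
Qed.

Lemma continuous_of_is_derive (f : R -> R) (x l : R) : is_derive f x l -> continuous f x.
Proof.
  intros Hf. apply (ex_derive_continuous (K := R_AbsRing) (V := R_NormedModule)).
  exists l. exact Hf.
Qed.

Lemma ex_RInt_of_continuous (f : R -> R) :
  (forall x, continuous f x) -> forall a b, ex_RInt f a b.
Proof.
  intros Hf a b. apply (ex_RInt_continuous (V := R_CompleteNormedModule)). intros; apply Hf.
Qed.

Lemma RInt_unit_window (F : R -> R) c :
  ex_RInt F c (c + 1) -> RInt (fun s => F (c + s)) 0 1 = RInt F c (c + 1).
Proof.
  intros Hex.
  replace (RInt F c (c + 1)) with (RInt F (1 * 0 + c) (1 * 1 + c)) by (f_equal; ring).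
  rewrite <- RInt_comp_lin.
  - apply RInt_ext. intros s _. change (F (c + s) = 1 * F (1 * s + c)).
    rewrite Rmult_1_l. f_equal. ring.
  - replace (1 * 0 + c) with c by ring. replace (1 * 1 + c) with (c + 1) by ring. exact Hex.
Qed.

Lemma RInt_shift_difference (F : R -> R) a b :
  (forall x, continuous F x) ->
  ex_RInt (fun s => F (b + s) - F (a + s)) 0 1 /\
  RInt (fun s => F (b + s) - F (a + s)) 0 1 = RInt F b (b + 1) - RInt F a (a + 1).
Proof.
  intros HF.
  assert (Hshift : forall c, ex_RInt (fun s => F (c + s)) 0 1).
  { intros c. apply ex_RInt_of_continuous. intros s.
    apply (continuous_comp (fun s => c + s) F); [| apply HF].
    apply (continuous_plus (fun _ => c) (fun s => s));
      [apply continuous_const | apply continuous_id]. }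
  split.
  - apply (ex_RInt_minus (V := R_NormedModule) (fun s => F (b + s)) (fun s => F (a + s)));
      apply Hshift.
  - rewrite <- !RInt_unit_window by apply (ex_RInt_of_continuous F HF).
    apply (RInt_minus (V := R_CompleteNormedModule) (fun s => F (b + s)) (fun s => F (a + s)));
      apply Hshift.
Qed.

Lemma is_RInt_gen_unit_windows (F : R -> R) M :
  (forall x, continuous F x) -> is_RInt_gen F minf pinf M ->
  forall eps, 0 < eps -> exists A B, forall a b, a < A -> B < b ->
    Rabs (RInt F a (a + 1)) < eps /\ Rabs (RInt F b (b + 1)) < eps.
Proof.
  intros HC HF eps Heps.
  assert (exF := ex_RInt_of_continuous F HC).
  destruct (is_RInt_gen_RInt_close F M HF exF (eps / 2)) as [A [B Hclose]]; [lra |].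
  exists (A - 1), B. intros a b Ha Hb.
  assert (E0 := Hclose a b ltac:(lra) Hb). assert (E1 := E0).
  assert (E2 := Hclose (a + 1) b ltac:(lra) Hb).
  assert (E3 := Hclose a (b + 1) ltac:(lra) ltac:(lra)).
  rewrite <- (RInt_Chasles F a (a + 1) b) in E1 by apply exF.
  rewrite <- (RInt_Chasles F a b (b + 1)) in E3 by apply exF.
  unfold plus in E1, E3; simpl in E1, E3.
  apply Rabs_def2 in E0, E1, E2, E3. split; apply Rabs_def1; lra.
Qed.

(* Averaging [F b' - F a' = RInt dF a' b' ~ L] over [a' in [a, a+1]], [b' in [b, b+1]]
   gives [RInt F b (b+1) - RInt F a (a+1) ~ L], whereas integrability of [F] makes both
   window integrals small. *)
Lemma is_RInt_gen_derive_zero (F dF : R -> R) (L M : R) :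
  (forall x, is_derive F x (dF x)) -> (forall x, continuous dF x) ->
  is_RInt_gen dF minf pinf L -> is_RInt_gen F minf pinf M -> L = 0.
Proof.
  intros HD HC HdF HF.
  destruct (Req_dec L 0) as [| HL0]; [assumption | exfalso].
  assert (HL : 0 < Rabs L) by (apply Rabs_pos_lt; exact HL0).
  assert (HCF : forall x, continuous F x)
    by (intros x; apply (continuous_of_is_derive _ _ _ (HD x))).
  destruct (is_RInt_gen_unit_windows F M HCF HF (Rabs L / 4)) as [A1 [B1 Hwin]]; [lra |].
  destruct (is_RInt_gen_RInt_close dF L HdF (ex_RInt_of_continuous dF HC) (Rabs L / 2))
    as [A2 [B2 HdF2]]; [lra |].
  set (a := Rmin A1 A2 - 2). set (b := Rmax B1 B2 + 1).
  assert (Ha : a + 1 < A1 /\ a + 1 < A2)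
    by (unfold a; pose proof (Rmin_l A1 A2); pose proof (Rmin_r A1 A2); lra).
  assert (Hb : B1 < b /\ B2 < b)
    by (unfold b; pose proof (Rmax_l B1 B2); pose proof (Rmax_r B1 B2); lra).
  destruct (Hwin a b ltac:(lra) ltac:(lra)) as [Hleft Hright].
  set (G := fun s => F (b + s) - F (a + s)).
  assert (HG : forall s, 0 <= s <= 1 -> Rabs (G s - L) < Rabs L / 2).
  { intros s Hs. unfold G.
    replace (F (b + s) - F (a + s)) with (RInt dF (a + s) (b + s)).
    - apply HdF2; lra.
    - apply is_RInt_unique. apply (is_RInt_derive (V := R_CompleteNormedModule) F dF);
        intros; [apply HD | apply HC]. }
  destruct (RInt_shift_difference F a b HCF) as [exG HintG]. fold G in exG, HintG.
  assert (Hlo : RInt (fun _ => L - Rabs L / 2) 0 1 <= RInt G 0 1).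
  { apply RInt_le; [lra | apply ex_RInt_const | exact exG |].
    intros s Hs. specialize (HG s ltac:(lra)). apply Rabs_def2 in HG. lra. }
  assert (Hhi : RInt G 0 1 <= RInt (fun _ => L + Rabs L / 2) 0 1).
  { apply RInt_le; [lra | exact exG | apply ex_RInt_const |].
    intros s Hs. specialize (HG s ltac:(lra)). apply Rabs_def2 in HG. lra. }
  rewrite !RInt_const in Hlo, Hhi. change scal with Rmult in Hlo, Hhi.
  rewrite HintG in Hlo, Hhi. apply Rabs_def2 in Hleft, Hright.
  destruct (Rcase_abs L) as [Hneg | Hpos];
    [rewrite Rabs_left in * by lra | rewrite Rabs_right in * by lra]; lra.
Qed.

Lemma nat_ind_pred (P : nat -> Prop) :
  P 0%nat -> (forall n, P (n - 1)%nat -> P n -> P (S n)) -> forall n, P n.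
Proof.
  intros H0 HS.
  assert (H : forall n, P n /\ P (S n)).
  { induction n as [| n [IHn IHSn]].
    - split; [exact H0 | exact (HS 0%nat H0 H0)].
    - split; [exact IHSn |]. apply HS; [| exact IHSn].
      replace (S n - 1)%nat with n by lia. exact IHn. }
  intros n. apply H.
Qed.

(* Stated at type [R -> R], so that the side goals they produce are [ring]/[field] goals in [R]. *)
Lemma is_derive_ext_pointwise (f g : R -> R) (x l : R) :
  (forall y, f y = g y) -> is_derive f x l -> is_derive g x l.
Proof. apply is_derive_ext. Qed.

Lemma is_derive_eq (f : R -> R) (x l l' : R) : is_derive f x l -> l = l' -> is_derive f x l'.
Proof. intros Hf <-. exact Hf. Qed.

Section OrthonormalSystem.

Variables (w : R -> R) (p : nat -> R -> R) (a : nat -> R).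
Hypothesis p_orthonormal : forall m n,
  is_RInt_gen (fun x => p m x * p n x * w x) minf pinf (if Nat.eqb m n then 1 else 0).
Hypothesis a_0 : a 0%nat = 0.
Hypothesis a_pos : forall n, (1 <= n)%nat -> 0 < a n.
Hypothesis p_recurrence : forall n x, a (S n) * p (S n) x = x * p n x - a n * p (n - 1)%nat x.
Hypothesis p_0_const : forall x, p 0%nat x = p 0%nat 0.

Definition is_coef (f : R -> R) (k : nat) (l : R) : Prop :=
  is_RInt_gen (fun x => f x * p k x * w x) minf pinf l.
Definition coef (f : R -> R) (k : nat) : R := RInt_gen (fun x => f x * p k x * w x) minf pinf.
Definition has_coefs (f : R -> R) : Prop := forall k, is_coef f k (coef f k).

Lemma coef_unique f k (l : R) : is_coef f k l -> coef f k = l.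
Proof. intros H. exact (is_RInt_gen_unique _ _ H). Qed.

Lemma has_coefs_intro f (l : nat -> R) : (forall k, is_coef f k (l k)) -> has_coefs f.
Proof. intros H k. rewrite (coef_unique _ _ _ (H k)). apply H. Qed.

Lemma is_coef_lincomb f g k (lf lg c d : R) : is_coef f k lf -> is_coef g k lg ->
  is_coef (fun x => c * f x + d * g x) k (c * lf + d * lg).
Proof.
  intros Hf Hg. unfold is_coef.
  apply is_RInt_gen_ext_pointwise with (2 := is_RInt_gen_lincomb _ _ _ _ c d Hf Hg).
  intros x. ring.
Qed.

Lemma has_coefs_lincomb f g c d :
  has_coefs f -> has_coefs g -> has_coefs (fun x => c * f x + d * g x).
Proof.
  intros Hf Hg. apply has_coefs_intro with (fun k => c * coef f k + d * coef g k).
  intros k. apply is_coef_lincomb; auto.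
Qed.

Lemma coef_lincomb f g c d k : has_coefs f -> has_coefs g ->
  coef (fun x => c * f x + d * g x) k = c * coef f k + d * coef g k.
Proof. intros Hf Hg. apply coef_unique, is_coef_lincomb; auto. Qed.

Lemma has_coefs_p m : has_coefs (p m).
Proof.
  apply has_coefs_intro with (fun k => if Nat.eqb m k then 1 else 0). exact (p_orthonormal m).
Qed.

Lemma coef_p m k : coef (p m) k = if Nat.eqb m k then 1 else 0.
Proof. apply coef_unique. exact (p_orthonormal m k). Qed.

Lemma coef_p_diag m : coef (p m) m = 1.
Proof. rewrite coef_p, Nat.eqb_refl. reflexivity. Qed.

Lemma coef_p_offdiag m k : m <> k -> coef (p m) k = 0.
Proof. intros Hmk. rewrite coef_p. apply Nat.eqb_neq in Hmk. rewrite Hmk. reflexivity. Qed.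

Lemma is_coef_mulx f k : has_coefs f ->
  is_coef (fun x => x * f x) k (a (S k) * coef f (S k) + a k * coef f (k - 1)%nat).
Proof.
  intros Hf. unfold is_coef.
  apply is_RInt_gen_ext_pointwise
    with (2 := is_RInt_gen_lincomb _ _ _ _ (a (S k)) (a k) (Hf (S k)) (Hf (k - 1)%nat)).
  intros x.
  assert (Hx : x * p k x = a (S k) * p (S k) x + a k * p (k - 1)%nat x)
    by (rewrite p_recurrence; ring).
  replace (x * f x * p k x * w x) with (f x * (x * p k x) * w x) by ring.
  rewrite Hx. ring.
Qed.

Lemma has_coefs_pow j f : has_coefs f -> has_coefs (fun x => x ^ j * f x).
Proof.
  intros Hf. induction j as [| j IHj].
  - apply has_coefs_intro with (coef f). intros k. unfold is_coef.
    apply is_RInt_gen_ext_pointwise with (fun x => f x * p k x * w x); [| apply Hf].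
    intros x. simpl. ring.
  - apply has_coefs_intro with (fun k => a (S k) * coef (fun x => x ^ j * f x) (S k)
                                         + a k * coef (fun x => x ^ j * f x) (k - 1)%nat).
    intros k. unfold is_coef.
    apply is_RInt_gen_ext_pointwise with (fun x => x * (x ^ j * f x) * p k x * w x);
      [| apply (is_coef_mulx _ k IHj)].
    intros x. simpl. ring.
Qed.

Lemma coef_pow_0 f k : coef (fun x => x ^ 0 * f x) k = coef f k.
Proof. f_equal. apply functional_extensionality. intros x. simpl. ring. Qed.

Lemma coef_pow_succ j f k : has_coefs f ->
  coef (fun x => x ^ S j * f x) k =
  a (S k) * coef (fun x => x ^ j * f x) (S k) + a k * coef (fun x => x ^ j * f x) (k - 1)%nat.
Proof.
  intros Hf. rewrite <- (coef_unique _ _ _ (is_coef_mulx _ k (has_coefs_pow j f Hf))).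
  f_equal. apply functional_extensionality. intros x. simpl. ring.
Qed.


Definition dp (n : nat) : R -> R := Derive (p n).

Lemma is_derive_p_0 x : is_derive (p 0%nat) x 0.
Proof.
  apply (is_derive_ext_pointwise (fun _ => p 0%nat 0)); [intros y; symmetry; apply p_0_const |].
  apply (is_derive_const (K := R_AbsRing) (V := R_NormedModule)).
Qed.

Lemma is_derive_p_succ n :
  (forall x, is_derive (p n) x (dp n x)) ->
  (forall x, is_derive (p (n - 1)%nat) x (dp (n - 1)%nat x)) ->
  forall x, is_derive (p (S n)) x (/ a (S n) * (p n x + x * dp n x - a n * dp (n - 1)%nat x)).
Proof.
  intros Hn Hpred x.
  assert (Ha : a (S n) <> 0) by (apply Rgt_not_eq, a_pos; lia).
  apply (is_derive_ext_pointwise (fun y => / a (S n) * (y * p n y - a n * p (n - 1)%nat y))).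
  { intros y. rewrite <- p_recurrence. field. exact Ha. }
  apply is_derive_scal, is_derive_eq with (1 * p n x + x * dp n x - a n * dp (n - 1)%nat x);
    [| ring].
  apply (is_derive_minus (fun y => y * p n y) (fun y => a n * p (n - 1)%nat y)).
  - apply (is_derive_mult (fun y => y) (p n)); [apply (is_derive_id (K := R_AbsRing)) | apply Hn |].
    intros; apply Rmult_comm.
  - apply is_derive_scal, Hpred.
Qed.

Lemma derive_p_spec n : (forall x, is_derive (p n) x (dp n x)) /\ (forall x, continuous (dp n) x).
Proof.
  induction n as [| n [Hpred Cpred] [Hn Cn]] using nat_ind_pred.
  - assert (Hdp : forall x, dp 0%nat x = 0) by (intros x; apply is_derive_unique, is_derive_p_0).
    split; intros x.
    + rewrite Hdp. apply is_derive_p_0.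
    + apply (continuous_ext (fun _ => 0)); [intros y; symmetry; apply Hdp |].
      apply continuous_const.
  - assert (Hd := is_derive_p_succ n Hn Hpred).
    assert (Hdp : forall x, dp (S n) x = / a (S n) * (p n x + x * dp n x - a n * dp (n - 1)%nat x))
      by (intros x; apply is_derive_unique, Hd).
    split; intros x.
    + rewrite Hdp. apply Hd.
    + apply (continuous_ext (fun x => / a (S n) * (p n x + x * dp n x - a n * dp (n - 1)%nat x)));
        [intros y; symmetry; apply Hdp |].
      apply (continuous_mult (fun _ => / a (S n))); [apply continuous_const |].
      apply (continuous_minus (fun x => p n x + x * dp n x) (fun x => a n * dp (n - 1)%nat x)).
      * apply (continuous_plus (p n) (fun x => x * dp n x)).
        -- apply (continuous_of_is_derive _ _ _ (Hn x)).
        -- apply (continuous_mult (fun x => x) (dp n)); [apply continuous_id | apply Cn].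
      * apply (continuous_mult (fun _ => a n)); [apply continuous_const | apply Cpred].
Qed.

Lemma dp_succ n :
  dp (S n) = fun x => / a (S n) * (p n x + x * dp n x - a n * dp (n - 1)%nat x).
Proof.
  apply functional_extensionality. intros x. apply is_derive_unique, is_derive_p_succ.
  - apply derive_p_spec.
  - apply derive_p_spec.
Qed.

Lemma coefs_dp n :
  has_coefs (dp n) /\ (forall k, (n <= k)%nat -> coef (dp n) k = 0) /\
  ((1 <= n)%nat -> coef (dp n) (n - 1)%nat = INR n / a n).
Proof.
  induction n as [| n [Gpred [Zpred _]] [Gn [Zn Vn]]] using nat_ind_pred.
  - assert (Hdp : dp 0%nat = fun x => 0 * p 0%nat x + 0 * p 0%nat x).
    { apply functional_extensionality. intros x. rewrite Rmult_0_l, Rplus_0_l.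
      apply is_derive_unique, is_derive_p_0. }
    rewrite Hdp. split; [| split].
    + apply has_coefs_lincomb; apply has_coefs_p.
    + intros k _. rewrite coef_lincomb by apply has_coefs_p. ring.
    + lia.
  - set (c := / a (S n)).
    assert (Hdp : dp (S n) =
      fun x => c * (1 * p n x + 1 * (x * dp n x)) + - (c * a n) * dp (n - 1)%nat x).
    { rewrite dp_succ. apply functional_extensionality. intros x. unfold c. ring. }
    assert (Hcoef : forall k, is_coef (dp (S n)) k
      (c * (1 * coef (p n) k + 1 * (a (S k) * coef (dp n) (S k) + a k * coef (dp n) (k - 1)%nat))
       + - (c * a n) * coef (dp (n - 1)%nat) k)).
    { intros k. rewrite Hdp. apply is_coef_lincomb; [apply is_coef_lincomb |].
      - apply has_coefs_p.
      - apply is_coef_mulx, Gn.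
      - apply Gpred. }
    assert (Ha : 0 < a (S n)) by (apply a_pos; lia).
    split; [| split].
    + exact (has_coefs_intro _ _ Hcoef).
    + intros k Hk. rewrite (coef_unique _ _ _ (Hcoef k)).
      rewrite coef_p_offdiag, !Zn, Zpred by lia. ring.
    + intros _. rewrite (coef_unique _ _ _ (Hcoef _)).
      replace (S n - 1)%nat with n by lia.
      rewrite coef_p_diag, Zn, Zpred by lia. unfold c.
      destruct n as [| n].
      * rewrite a_0. simpl. field. lra.
      * rewrite Vn by lia. assert (0 < a (S n)) by (apply a_pos; lia).
        rewrite !S_INR. field. lra.
Qed.

Lemma coef_x_p m k :
  coef (fun x => x ^ 1 * p m x) k = a (S k) * coef (p m) (S k) + a k * coef (p m) (k - 1)%nat.
Proof. rewrite coef_pow_succ, !coef_pow_0 by apply has_coefs_p. reflexivity. Qed.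

Lemma coef_x_p_pred m : coef (fun x => x ^ 1 * p (S m) x) m = a (S m).
Proof. rewrite coef_x_p, coef_p_diag, coef_p_offdiag by lia. ring. Qed.

Lemma coef_x_p_succ m : coef (fun x => x ^ 1 * p m x) (S m) = a (S m).
Proof.
  rewrite coef_x_p, coef_p_offdiag by lia. replace (S m - 1)%nat with m by lia.
  rewrite coef_p_diag. ring.
Qed.

Lemma coef_x3_p_pred m :
  coef (fun x => x ^ 3 * p (S m) x) m = a (S m) * (a m ^ 2 + a (S m) ^ 2 + a (S (S m)) ^ 2).
Proof.
  rewrite (coef_pow_succ 2), !(coef_pow_succ 1) by apply has_coefs_p.
  replace (S m - 1)%nat with m by lia.
  rewrite coef_x_p_pred, (coef_x_p_succ (S m)).
  destruct m as [| m].
  - rewrite a_0. ring.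
  - replace (S m - 1)%nat with m by lia. rewrite coef_x_p_pred, coef_x_p.
    rewrite !coef_p_offdiag by lia. ring.
Qed.

Lemma coef_x2_p_0 : coef (fun x => x ^ 2 * p 0%nat x) 0 = a 1%nat ^ 2.
Proof.
  rewrite !coef_pow_succ, !coef_pow_0, !coef_p by apply has_coefs_p. simpl. rewrite a_0. ring.
Qed.

Lemma coef_x4_p_0 : coef (fun x => x ^ 4 * p 0%nat x) 0 = a 1%nat ^ 2 * (a 1%nat ^ 2 + a 2%nat ^ 2).
Proof.
  rewrite !coef_pow_succ, !coef_pow_0, !coef_p by apply has_coefs_p. simpl. rewrite a_0. ring.
Qed.

Lemma p_0_ne0 : p 0%nat 0 <> 0.
Proof.
  intros H0. assert (H1 := p_orthonormal 0 0). simpl in H1.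
  assert (H2 : is_RInt_gen (fun x => p 0%nat x * p 0%nat x * w x) minf pinf (0 * 1)).
  { apply is_RInt_gen_ext_pointwise with (fun x => 0 * (p 0%nat x * p 0%nat x * w x)).
    - intros x. rewrite (p_0_const x), H0. ring.
    - exact (is_RInt_gen_scal _ 0 _ H1). }
  assert (E := eq_trans (eq_sym (is_RInt_gen_unique _ _ H1)) (is_RInt_gen_unique _ _ H2)).
  simpl in E. lra.
Qed.

Lemma is_RInt_gen_pow_weight j :
  is_RInt_gen (fun x => x ^ j * w x) minf pinf
    (coef (fun x => x ^ j * p 0%nat x) 0 / p 0%nat 0 ^ 2).
Proof.
  assert (H := has_coefs_pow j _ (has_coefs_p 0) 0%nat). unfold is_coef in H.
  apply is_RInt_gen_ext_pointwise
    with (fun x => / p 0%nat 0 ^ 2 * (x ^ j * p 0%nat x * p 0%nat x * w x)).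
  - intros x. rewrite (p_0_const x). field. apply p_0_ne0.
  - replace (coef (fun x => x ^ j * p 0%nat x) 0 / p 0%nat 0 ^ 2)
      with (/ p 0%nat 0 ^ 2 * coef (fun x => x ^ j * p 0%nat x) 0) by (unfold Rdiv; ring).
    exact (is_RInt_gen_scal _ _ _ H).
Qed.

Variable t : R.
Hypothesis w_derive : forall x, is_derive w x (- (x ^ 3 + 2 * t * x) * w x).

Lemma is_derive_p_p_w m n x :
  is_derive (fun x => p m x * p n x * w x) x
    (dp m x * p n x * w x + p m x * dp n x * w x + p m x * p n x * (- (x ^ 3 + 2 * t * x) * w x)).
Proof.
  apply is_derive_eq with ((dp m x * p n x + p m x * dp n x) * w x
                           + p m x * p n x * (- (x ^ 3 + 2 * t * x) * w x)); [| ring].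
  apply (is_derive_mult (fun x => p m x * p n x) w); [| apply w_derive | intros; apply Rmult_comm].
  apply (is_derive_mult (p m) (p n)); [apply derive_p_spec | apply derive_p_spec |].
  intros; apply Rmult_comm.
Qed.

Lemma continuous_derive_p_p_w m n x :
  continuous (fun x => dp m x * p n x * w x + p m x * dp n x * w x
                       + p m x * p n x * (- (x ^ 3 + 2 * t * x) * w x)) x.
Proof.
  assert (Cp : forall k, continuous (p k) x)
    by (intros k; apply (continuous_of_is_derive _ _ _ (proj1 (derive_p_spec k) x))).
  assert (Cdp : forall k, continuous (dp k) x) by (intros k; apply derive_p_spec).
  assert (Cw : continuous w x) by apply (continuous_of_is_derive _ _ _ (w_derive x)).
  assert (Cpot : continuous (fun y => - (y ^ 3 + 2 * t * y)) x).
  { apply (continuous_of_is_derive _ _ (- (3 * x ^ 2 + 2 * t))). auto_derive; [auto | ring]. }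
  apply (continuous_plus (fun x => dp m x * p n x * w x + p m x * dp n x * w x)
                         (fun x => p m x * p n x * (- (x ^ 3 + 2 * t * x) * w x))).
  - apply (continuous_plus (fun x => dp m x * p n x * w x) (fun x => p m x * dp n x * w x)).
    + apply (continuous_mult (fun x => dp m x * p n x) w); auto.
      apply (continuous_mult (dp m) (p n)); auto.
    + apply (continuous_mult (fun x => p m x * dp n x) w); auto.
      apply (continuous_mult (p m) (dp n)); auto.
  - apply (continuous_mult (fun x => p m x * p n x) (fun x => - (x ^ 3 + 2 * t * x) * w x)).
    + apply (continuous_mult (p m) (p n)); auto.
    + apply (continuous_mult (fun x => - (x ^ 3 + 2 * t * x)) w); auto.
Qed.

(* The boundary term of [d/dx (p_(m+1) p_m w)] vanishes at infinity. *)
Lemma coef_dp_by_parts m :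
  coef (dp (S m)) m + coef (dp m) (S m) =
  coef (fun x => x ^ 3 * p (S m) x) m + 2 * t * coef (fun x => x ^ 1 * p (S m) x) m.
Proof.
  destruct (coefs_dp (S m)) as [G1 _]. destruct (coefs_dp m) as [G2 _].
  assert (G3 := has_coefs_pow 3 _ (has_coefs_p (S m)) m).
  assert (G4 := has_coefs_pow 1 _ (has_coefs_p (S m)) m).
  assert (HdF := is_RInt_gen_lincomb _ _ _ _ 1 1
                   (is_RInt_gen_lincomb _ _ _ _ 1 1 (G1 m) (G2 (S m)))
                   (is_RInt_gen_lincomb _ _ _ _ (-1) (- (2 * t)) G3 G4)).
  assert (HF : is_RInt_gen (fun x => p (S m) x * p m x * w x) minf pinf 0).
  { assert (H := p_orthonormal (S m) m).
    replace (Nat.eqb (S m) m) with false in H by (symmetry; apply Nat.eqb_neq; lia). exact H. }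
  enough (1 * (1 * coef (dp (S m)) m + 1 * coef (dp m) (S m))
          + 1 * (-1 * coef (fun x => x ^ 3 * p (S m) x) m
                 + - (2 * t) * coef (fun x => x ^ 1 * p (S m) x) m) = 0) by lra.
  apply (is_RInt_gen_derive_zero _ _ _ 0 (is_derive_p_p_w (S m) m)
           (continuous_derive_p_p_w (S m) m)); [| exact HF].
  apply is_RInt_gen_ext_pointwise with (2 := HdF). intros x. ring.
Qed.

Lemma freud_equation m :
  a (S m) ^ 2 * (a m ^ 2 + a (S m) ^ 2 + a (S (S m)) ^ 2) + 2 * t * a (S m) ^ 2 = INR (S m).
Proof.
  assert (H := coef_dp_by_parts m).
  destruct (coefs_dp (S m)) as [_ [_ Vpred]]. destruct (coefs_dp m) as [_ [Zsucc _]].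
  replace (S m - 1)%nat with m in Vpred by lia.
  rewrite Vpred, Zsucc, coef_x3_p_pred, coef_x_p_pred in H by lia.
  assert (Ha : 0 < a (S m)) by (apply a_pos; lia).
  apply (Rmult_eq_compat_l (a (S m))) in H.
  replace (a (S m) * (INR (S m) / a (S m) + 0)) with (INR (S m)) in H by (field; lra).
  rewrite H. ring.
Qed.

End OrthonormalSystem.

Lemma exp_neg_sub1_bounds z : - z <= exp (- z) - 1 <= - z * exp (- z).
Proof.
  assert (H1 := exp_ineq1_le (- z)). assert (H2 := exp_ineq1_le z).
  assert (Hinv : exp (- z) * exp z = 1) by (rewrite <- exp_plus, Rplus_opp_l; apply exp_0).
  assert (Hpos := exp_pos (- z)).
  split; nra.
Qed.

Lemma quartic_weight_shift s h x :
  quartic_weight (s + h) x = quartic_weight s x * exp (- (h * x ^ 2)).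
Proof. unfold quartic_weight. rewrite <- exp_plus. f_equal. ring. Qed.

Lemma Rabs_difference_quotient_le (D h A A' : R) :
  h <> 0 -> - h * A <= D <= - h * A' -> Rabs (D / h - - A) <= Rabs (A' - A).
Proof.
  intros Hh HD.
  replace (D / h - - A) with ((D + h * A) / h) by (field; exact Hh).
  unfold Rdiv. rewrite Rabs_mult, Rabs_inv.
  apply (Rmult_le_reg_r (Rabs h)); [apply Rabs_pos_lt, Hh |].
  rewrite Rmult_assoc, Rinv_l, Rmult_1_r by (apply Rabs_no_R0, Hh).
  rewrite <- Rabs_mult, (Rabs_right (D + h * A)) by lra.
  replace ((A' - A) * h) with (- ((A - A') * h)) by ring. rewrite Rabs_Ropp.
  apply Rle_trans with ((A - A') * h); [lra | apply Rle_abs].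
Qed.

Section QuarticMoments.

Hypothesis moment_exists : forall j s, ex_RInt_gen (fun x => x ^ j * quartic_weight s x) minf pinf.

Definition moment (j : nat) (s : R) : R := RInt_gen (fun x => x ^ j * quartic_weight s x) minf pinf.

Lemma is_RInt_gen_moment j s :
  is_RInt_gen (fun x => x ^ j * quartic_weight s x) minf pinf (moment j s).
Proof. exact (RInt_gen_correct (V := R_CompleteNormedModule) _ (moment_exists j s)). Qed.

Lemma even_pow_nonneg k x : 0 <= x ^ (2 * k).
Proof. rewrite pow_mult. apply pow_le, pow2_ge_0. Qed.

Lemma moment_even_nonneg k s : 0 <= moment (2 * k) s.
Proof.
  replace 0 with (0 * moment (2 * k) s) by ring.
  apply is_RInt_gen_le with (fun x => 0 * (x ^ (2 * k) * quartic_weight s x))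
                            (fun x => x ^ (2 * k) * quartic_weight s x).
  - intros x. rewrite Rmult_0_l.
    apply Rmult_le_pos; [apply even_pow_nonneg | apply Rlt_le, exp_pos].
  - exact (is_RInt_gen_scal _ 0 _ (is_RInt_gen_moment _ _)).
  - apply is_RInt_gen_moment.
Qed.

Lemma moment_even_antitone k s r : s <= r -> moment (2 * k) r <= moment (2 * k) s.
Proof.
  intros Hsr. apply is_RInt_gen_le with (fun x => x ^ (2 * k) * quartic_weight r x)
                                        (fun x => x ^ (2 * k) * quartic_weight s x);
    [| apply is_RInt_gen_moment | apply is_RInt_gen_moment].
  intros x. apply Rmult_le_compat_l; [apply even_pow_nonneg |].
  replace r with (s + (r - s)) by ring. rewrite quartic_weight_shift.
  assert (Hz : 0 <= (r - s) * x ^ 2) by (apply Rmult_le_pos; [lra | apply pow2_ge_0]).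
  assert (B := exp_neg_sub1_bounds ((r - s) * x ^ 2)). assert (P := exp_pos (- ((r - s) * x ^ 2))).
  assert (W := exp_pos (- x ^ 4 / 4 - s * x ^ 2)). unfold quartic_weight. nra.
Qed.

Lemma moment_even_increment k s h :
  - h * moment (2 * k + 2) s <= moment (2 * k) (s + h) - moment (2 * k) s
  <= - h * moment (2 * k + 2) (s + h).
Proof.
  assert (HD := is_RInt_gen_lincomb _ _ _ _ 1 (-1) (is_RInt_gen_moment (2 * k) (s + h))
                                                    (is_RInt_gen_moment (2 * k) s)).
  replace (moment (2 * k) (s + h) - moment (2 * k) s)
    with (1 * moment (2 * k) (s + h) + -1 * moment (2 * k) s) by ring.
  assert (Hpt : forall x,
    - h * (x ^ (2 * k + 2) * quartic_weight s x) <=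
    1 * (x ^ (2 * k) * quartic_weight (s + h) x) + -1 * (x ^ (2 * k) * quartic_weight s x)
    <= - h * (x ^ (2 * k + 2) * quartic_weight (s + h) x)).
  { intros x. rewrite pow_add, !quartic_weight_shift.
    assert (B := exp_neg_sub1_bounds (h * x ^ 2)).
    assert (E : 0 <= x ^ (2 * k) * quartic_weight s x)
      by (apply Rmult_le_pos; [apply even_pow_nonneg | apply Rlt_le, exp_pos]).
    split; nra. }
  split.
  - apply (is_RInt_gen_le _ _ _ _ (fun x => proj1 (Hpt x))); [| exact HD].
    exact (is_RInt_gen_scal _ _ _ (is_RInt_gen_moment _ _)).
  - apply (is_RInt_gen_le _ _ _ _ (fun x => proj2 (Hpt x))); [exact HD |].
    exact (is_RInt_gen_scal _ _ _ (is_RInt_gen_moment _ _)).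
Qed.

Lemma moment_even_lipschitz k s h :
  Rabs h <= 1 ->
  Rabs (moment (2 * k) (s + h) - moment (2 * k) s) <= Rabs h * moment (2 * k + 2) (s - 1).
Proof.
  intros Hh. apply Rabs_le_between in Hh.
  assert (B := moment_even_increment k s h).
  replace (2 * k + 2)%nat with (2 * S k)%nat in * by lia.
  assert (N1 := moment_even_nonneg (S k) s). assert (N2 := moment_even_nonneg (S k) (s + h)).
  assert (M1 := moment_even_antitone (S k) (s - 1) s ltac:(lra)).
  assert (M2 := moment_even_antitone (S k) (s - 1) (s + h) ltac:(lra)).
  destruct (Rle_lt_dec 0 h) as [Hpos | Hneg].
  - rewrite (Rabs_right h) by lra. apply Rabs_le. split; nra.
  - rewrite (Rabs_left h) by lra. apply Rabs_le. split; nra.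
Qed.

Lemma is_derive_moment_even k s : is_derive (moment (2 * k)) s (- moment (2 * k + 2) s).
Proof.
  apply is_derive_Reals. intros eps Heps.
  set (K := moment (2 * k + 4) (s - 1)).
  assert (HK : 0 <= K) by (unfold K; replace (2 * k + 4)%nat with (2 * (k + 2))%nat by lia;
                           apply moment_even_nonneg).
  assert (Hdelta : 0 < Rmin 1 (eps / (K + 1)))
    by (apply Rmin_pos; [lra | apply Rdiv_lt_0_compat; lra]).
  exists (mkposreal _ Hdelta). intros h Hh0 Hh. simpl in Hh.
  assert (Hh1 := Rlt_le_trans _ _ _ Hh (Rmin_l 1 (eps / (K + 1)))).
  assert (Hh2 := Rlt_le_trans _ _ _ Hh (Rmin_r 1 (eps / (K + 1)))).
  assert (Lip := moment_even_lipschitz (S k) s h ltac:(lra)).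
  replace (2 * S k)%nat with (2 * k + 2)%nat in Lip by lia.
  replace (2 * k + 2 + 2)%nat with (2 * k + 4)%nat in Lip by lia. fold K in Lip.
  assert (Hquot := Rabs_difference_quotient_le _ _ _ _ Hh0 (moment_even_increment k s h)).
  assert (Habs := Rabs_pos h).
  apply (Rmult_lt_compat_r (K + 1)) in Hh2; [| lra].
  replace (eps / (K + 1) * (K + 1)) with eps in Hh2 by (field; lra).
  lra.
Qed.

End QuarticMoments.

Lemma is_derive_sqrt_twice (f df d2f g : R -> R) s :
  (forall r, 0 < f r) -> (forall r, sqrt (f r) = g r) ->
  (forall r, is_derive f r (df r)) -> is_derive df s (d2f s) ->
  is_derive g s (df s / (2 * g s)) /\
  is_derive (Derive g) s ((2 * f s * d2f s - df s ^ 2) / (4 * g s ^ 3)).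
Proof.
  intros Hpos Hg Hf Hdf.
  assert (Hgpos : forall r, 0 < g r) by (intros r; rewrite <- Hg; apply sqrt_lt_R0, Hpos).
  assert (Hd : forall r, is_derive g r (df r / (2 * g r))).
  { intros r. rewrite <- Hg. apply (is_derive_ext_pointwise (fun r => sqrt (f r))); [exact Hg |].
    apply (is_derive_sqrt f r (df r) (Hf r) (Hpos r)). }
  split; [apply Hd |].
  replace (Derive g) with (fun r => df r * / (2 * g r))
    by (apply functional_extensionality; intros r; symmetry; apply is_derive_unique, Hd).
  apply is_derive_eq
    with (d2f s * / (2 * g s) + df s * (- (2 * (df s / (2 * g s))) / (2 * g s) ^ 2)).
  - apply (is_derive_mult df (fun r => / (2 * g r))); [exact Hdf | | intros; apply Rmult_comm].
    apply (is_derive_inv (fun r => 2 * g r)); [| specialize (Hgpos s); lra].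
    apply is_derive_scal, Hd.
  - assert (Hsq : g s ^ 2 = f s) by (rewrite <- Hg; apply pow2_sqrt, Rlt_le, Hpos).
    specialize (Hgpos s). rewrite <- Hsq. field. lra.
Qed.

Section FreudAlgebra.

Variables (n t C A u B E : R).
Hypothesis u_pos : 0 < u.
Hypothesis freud_pred : A * (C + A + u + 2 * t) = n - 1.
Hypothesis freud_here : u * (A + u + B + 2 * t) = n.
Hypothesis freud_succ : B * (u + B + E + 2 * t) = n + 1.

(* Differentiating [B = n / u - u - A - 2 t] along the Toda flow. *)
Lemma toda_succ_identity :
  - n * (u * (A - B)) / u ^ 2 - u * (A - B) - A * (C - u) - 2 = B * (u - E).
Proof.
  replace (A * (C - u)) with (n - 1 - A * (A + 2 * u + 2 * t)) by lra.
  replace (B * (u - E)) with (B * (2 * u + B + 2 * t) - (n + 1)) by lra.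
  rewrite <- freud_here. field. lra.
Qed.

Lemma painleve_IV_identity :
  u * (A - B) * (A - B) + u * (A * (C - u) - B * (u - E)) =
  (u * (A - B)) ^ 2 / (2 * u) + 3 * u ^ 3 / 2 + 4 * t * u ^ 2
  + 2 * (t ^ 2 - - n / 2) * u + - n ^ 2 / 2 / u.
Proof.
  replace (A * (C - u)) with (n - 1 - A * (A + 2 * u + 2 * t)) by lra.
  replace (B * (u - E)) with (B * (2 * u + B + 2 * t) - (n + 1)) by lra.
  rewrite <- freud_here. field. lra.
Qed.

End FreudAlgebra.

Lemma painleve_IV_sqrt_identity (n t u du d2u : R) :
  0 < u ->
  d2u = du ^ 2 / (2 * u) + 3 * u ^ 3 / 2 + 4 * t * u ^ 2
        + 2 * (t ^ 2 - - n / 2) * u + - n ^ 2 / 2 / u ->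
  2 * u * d2u - du ^ 2 = (3 * u ^ 2 + 2 * t * u - n) * (u ^ 2 + 2 * t * u + n).
Proof. intros Hu ->. field. lra. Qed.

Lemma is_derive_quartic_weight (t x : R) :
  is_derive (quartic_weight t) x (- (x ^ 3 + 2 * t * x) * quartic_weight t x).
Proof.
  unfold quartic_weight. auto_derive; [exact I |].
  match goal with |- _ * exp ?e = _ => replace e with (- x ^ 4 / 4 - t * x ^ 2) by field end.
  field.
Qed.

Section QuarticFamily.

Variables (p : R -> nat -> R -> R) (a : R -> nat -> R).
Hypothesis p_orthonormal : forall t, orthonormal_system (quartic_weight t) (p t).
Hypothesis a_recurrence : forall t, recurrence_coeffs (p t) (a t).

Lemma p_0_const t x : p t 0%nat x = p t 0%nat 0.
Proof.
  destruct (proj1 (p_orthonormal t) 0%nat) as [c [_ Hc]]. rewrite !Hc. simpl. ring.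
Qed.

Definition u (n : nat) (s : R) : R := a s n ^ 2.

Lemma u_0 s : u 0 s = 0.
Proof. unfold u. rewrite (proj1 (a_recurrence s)). ring. Qed.

Lemma u_pos n s : (1 <= n)%nat -> 0 < u n s.
Proof. intros Hn. unfold u. assert (H := proj1 (proj2 (a_recurrence s)) n Hn). nra. Qed.

Lemma freud_equation_u n s : u n s * (u (n - 1)%nat s + u n s + u (S n) s + 2 * s) = INR n.
Proof.
  destruct n as [| m]; [rewrite u_0; simpl; ring |].
  destruct (a_recurrence s) as [a_0 [a_pos a_rec]].
  rewrite <- (freud_equation _ _ _ (proj2 (p_orthonormal s)) a_0 a_pos a_rec (p_0_const s) s
                (is_derive_quartic_weight s) m).
  unfold u. replace (S m - 1)%nat with m by lia. ring.
Qed.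

Lemma is_RInt_gen_quartic_moment j s :
  is_RInt_gen (fun x => x ^ j * quartic_weight s x) minf pinf
    (coef (quartic_weight s) (p s) (fun x => x ^ j * p s 0%nat x) 0 / p s 0%nat 0 ^ 2).
Proof.
  apply (is_RInt_gen_pow_weight _ _ (a s));
    [apply p_orthonormal | apply a_recurrence | apply p_0_const].
Qed.

Lemma quartic_moment_exists j s : ex_RInt_gen (fun x => x ^ j * quartic_weight s x) minf pinf.
Proof. eexists. apply is_RInt_gen_quartic_moment. Qed.

Lemma u_1_moments s :
  0 < moment 0 s /\ u 1 s = moment 2 s / moment 0 s /\
  moment 4 s / moment 0 s = u 1 s * (u 1 s + u 2 s).
Proof.
  destruct (a_recurrence s) as [a_0 [_ a_rec]].
  assert (Horth := proj2 (p_orthonormal s)).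
  assert (Hc := p_0_ne0 _ _ Horth (p_0_const s)).
  assert (Hc2 : 0 < p s 0%nat 0 ^ 2) by (apply pow2_gt_0, Hc).
  unfold moment.
  rewrite !(fun j => is_RInt_gen_unique _ _ (is_RInt_gen_quartic_moment j s)).
  rewrite (coef_x2_p_0 _ _ _ Horth a_0 a_rec), (coef_x4_p_0 _ _ _ Horth a_0 a_rec),
    coef_pow_0, (coef_p_diag _ _ Horth).
  unfold u. split; [| split].
  - apply Rdiv_lt_0_compat; lra.
  - field. lra.
  - field. lra.
Qed.

Definition du (n : nat) (s : R) : R := u n s * (u (n - 1)%nat s - u (S n) s).

Lemma is_derive_u_0 s : is_derive (u 0) s (du 0 s).
Proof.
  unfold du. rewrite u_0, Rmult_0_l.
  apply (is_derive_ext_pointwise (fun _ => 0)); [intros r; symmetry; apply u_0 |].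
  apply (is_derive_const (K := R_AbsRing) (V := R_NormedModule)).
Qed.

(* [u_1 = m_2 / m_0] and [m_2k' = - m_(2k+2)]. *)
Lemma is_derive_u_1 s : is_derive (u 1) s (du 1 s).
Proof.
  apply (is_derive_ext_pointwise (fun r => moment 2 r * / moment 0 r)).
  { intros r. symmetry. apply (u_1_moments r). }
  destruct (u_1_moments s) as [Hm0 [Hu1 Hm4]].
  apply is_derive_eq
    with (- moment 4 s * / moment 0 s + moment 2 s * (- - moment 2 s / moment 0 s ^ 2)).
  - apply (is_derive_mult (moment 2) (fun r => / moment 0 r)); [| | intros; apply Rmult_comm].
    + apply (is_derive_moment_even quartic_moment_exists 1).
    + apply (is_derive_inv (moment 0)); [| lra].
      apply (is_derive_moment_even quartic_moment_exists 0).
  - unfold du. simpl (1 - 1)%nat. rewrite u_0.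
    replace (- moment 4 s * / moment 0 s) with (- (moment 4 s / moment 0 s)) by (unfold Rdiv; ring).
    rewrite Hm4, Hu1. field. lra.
Qed.

Lemma is_derive_u_succ m :
  (forall s, is_derive (u m) s (du m s)) -> (forall s, is_derive (u (S m)) s (du (S m) s)) ->
  forall s, is_derive (u (S (S m))) s (du (S (S m)) s).
Proof.
  intros Hm HSm s.
  assert (Hu : forall r, 0 < u (S m) r) by (intros r; apply u_pos; lia).
  apply (is_derive_ext_pointwise (fun r => INR (S m) * / u (S m) r - u (S m) r - u m r - 2 * r)).
  { intros r. rewrite <- (freud_equation_u (S m) r). replace (S m - 1)%nat with m by lia.
    field. specialize (Hu r). lra. }
  apply is_derive_eq
    with (INR (S m) * (- du (S m) s / u (S m) s ^ 2) - du (S m) s - du m s - 2 * 1).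
  - apply (is_derive_minus (fun r => INR (S m) * / u (S m) r - u (S m) r - u m r) (fun r => 2 * r)).
    + apply (is_derive_minus (fun r => INR (S m) * / u (S m) r - u (S m) r) (u m)); [| apply Hm].
      apply (is_derive_minus (fun r => INR (S m) * / u (S m) r) (u (S m))); [| apply HSm].
      apply is_derive_scal, (is_derive_inv (u (S m))); [apply HSm | specialize (Hu s); lra].
    + apply is_derive_scal, (is_derive_id (K := R_AbsRing)).
  - assert (F0 := freud_equation_u m s). assert (F1 := freud_equation_u (S m) s).
    assert (F2 := freud_equation_u (S (S m)) s).
    replace (S m - 1)%nat with m in F1 by lia. replace (S (S m) - 1)%nat with (S m) in F2 by lia.
    rewrite S_INR in F2.
    unfold du. replace (S m - 1)%nat with m by lia. replace (S (S m) - 1)%nat with (S m) by lia.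
    rewrite <- (toda_succ_identity (INR (S m)) s (u (m - 1)%nat s) (u m s) (u (S m) s) _ _ (Hu s));
      [field; specialize (Hu s); lra | rewrite S_INR; lra | exact F1 | exact F2].
Qed.

Lemma is_derive_u n s : is_derive (u n) s (du n s).
Proof.
  revert s. induction n as [| n Hpred Hn] using nat_ind_pred.
  - apply is_derive_u_0.
  - destruct n as [| m]; [apply is_derive_u_1 |].
    replace (S m - 1)%nat with m in Hpred by lia. exact (is_derive_u_succ m Hpred Hn).
Qed.

Lemma Derive_u n : Derive (u n) = du n.
Proof. apply functional_extensionality. intros s. apply is_derive_unique, is_derive_u. Qed.

Definition d2u (n : nat) (s : R) : R :=
  du n s * (u (n - 1)%nat s - u (S n) s) + u n s * (du (n - 1)%nat s - du (S n) s).

Lemma is_derive_du n s : is_derive (du n) s (d2u n s).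
Proof.
  apply (is_derive_mult (u n) (fun r => u (n - 1)%nat r - u (S n) r));
    [apply is_derive_u | | intros; apply Rmult_comm].
  apply (is_derive_minus (u (n - 1)%nat) (u (S n))); apply is_derive_u.
Qed.

Lemma painleve_IV_u n s : (1 <= n)%nat ->
  d2u n s = du n s ^ 2 / (2 * u n s) + 3 * u n s ^ 3 / 2 + 4 * s * u n s ^ 2
            + 2 * (s ^ 2 - - INR n / 2) * u n s + - INR n ^ 2 / 2 / u n s.
Proof.
  intros Hn.
  assert (Fpred := freud_equation_u (n - 1) s). assert (Fn := freud_equation_u n s).
  assert (Fsucc := freud_equation_u (S n) s).
  replace (S (n - 1)) with n in Fpred by lia. replace (S n - 1)%nat with n in Fsucc by lia.
  rewrite minus_INR in Fpred by lia. rewrite S_INR in Fsucc.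
  unfold d2u, du. replace (S (n - 1)) with n by lia. replace (S n - 1)%nat with n by lia.
  apply painleve_IV_identity; [apply u_pos; exact Hn | exact Fpred | exact Fn | exact Fsucc].
Qed.

Lemma painleve_IV_u_derivatives n t : (1 <= n)%nat ->
  ex_derive (u n) t /\ ex_derive (fun s => Derive (u n) s) t /\
  Derive_n (u n) 2 t
  = Derive (u n) t ^ 2 / (2 * u n t) + 3 * u n t ^ 3 / 2 + 4 * t * u n t ^ 2
    + 2 * (t ^ 2 - - INR n / 2) * u n t + - INR n ^ 2 / 2 / u n t.
Proof.
  intros Hn. rewrite Derive_u.
  split; [exists (du n t); apply is_derive_u | split; [exists (d2u n t); apply is_derive_du |]].
  change (Derive_n (u n) 2 t) with (Derive (Derive (u n)) t).
  rewrite Derive_u, (is_derive_unique _ _ _ (is_derive_du n t)).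
  apply painleve_IV_u, Hn.
Qed.

Lemma a_derivatives_quartic_equation n t : (1 <= n)%nat ->
  ex_derive (fun s => a s n) t /\ ex_derive (fun s => Derive (fun r => a r n) s) t /\
  4 * a t n ^ 3 * Derive_n (fun s => a s n) 2 t
  = (3 * a t n ^ 4 + 2 * t * a t n ^ 2 - INR n) * (a t n ^ 4 + 2 * t * a t n ^ 2 + INR n).
Proof.
  intros Hn.
  assert (Hpos : forall s, 0 < u n s) by (intros s; apply u_pos, Hn).
  assert (Hsqrt : forall s, sqrt (u n s) = a s n)
    by (intros s; apply sqrt_pow2, Rlt_le, (proj1 (proj2 (a_recurrence s))), Hn).
  destruct (is_derive_sqrt_twice (u n) (du n) (d2u n) (fun s => a s n) t Hpos Hsqrt
              (is_derive_u n) (is_derive_du n t)) as [H1 H2].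
  split; [eexists; exact H1 | split; [eexists; exact H2 |]].
  change (Derive_n (fun s => a s n) 2 t) with (Derive (Derive (fun s => a s n)) t).
  rewrite (is_derive_unique _ _ _ H2).
  assert (Hid := painleve_IV_sqrt_identity (INR n) t _ _ _ (Hpos t) (painleve_IV_u n t Hn)).
  assert (Ha := Hpos t). unfold u in Hid, Ha |- *.
  replace ((3 * a t n ^ 4 + 2 * t * a t n ^ 2 - INR n) * (a t n ^ 4 + 2 * t * a t n ^ 2 + INR n))
    with ((3 * (a t n ^ 2) ^ 2 + 2 * t * a t n ^ 2 - INR n)
          * ((a t n ^ 2) ^ 2 + 2 * t * a t n ^ 2 + INR n))
    by ring.
  rewrite <- Hid. field. nra.
Qed.

End QuarticFamily.

Theorem mainTheorem12
  (p : R -> nat -> R -> R) (a : R -> nat -> R)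
  (Hp : forall t, orthonormal_system (quartic_weight t) (p t))
  (Ha : forall t, recurrence_coeffs (p t) (a t)) :
  forall (n : nat), (1 <= n)%nat ->
    (forall t,
       (a t n) ^ 2 * ((a t (n - 1)%nat) ^ 2 + (a t n) ^ 2 + (a t (S n)) ^ 2)
         + 2 * t * (a t n) ^ 2 = INR n) /\
    (forall t,
       ex_derive (fun s => a s n) t /\
       ex_derive (fun s => Derive (fun r => a r n) s) t /\
       4 * (a t n) ^ 3 * Derive_n (fun s => a s n) 2 t
         = (3 * (a t n) ^ 4 + 2 * t * (a t n) ^ 2 - INR n)
           * ((a t n) ^ 4 + 2 * t * (a t n) ^ 2 + INR n)) /\
    (let u := fun s => (a s n) ^ 2 in
     let alpha := - INR n / 2 in
     let beta := - (INR n) ^ 2 / 2 in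
     forall t,
       ex_derive u t /\
       ex_derive (fun s => Derive u s) t /\
       Derive_n u 2 t
         = (Derive u t) ^ 2 / (2 * u t) + 3 * (u t) ^ 3 / 2 + 4 * t * (u t) ^ 2
           + 2 * (t ^ 2 - alpha) * u t + beta / u t).
Proof.
  intros n Hn. split; [| split].
  - intros t. rewrite <- (freud_equation_u p a Hp Ha n t). unfold u. ring.
  - intros t. exact (a_derivatives_quartic_equation p a Hp Ha n t Hn).
  - intros u' alpha beta t. exact (painleve_IV_u_derivatives p a Hp Ha n t Hn).
Qed.
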